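(* Let $m,n\ge1$, and for each $i\in[m]=\{1,\dots,m\}$ let $f_i:\mathbb{R}^n\to\mathbb{R}$ be differentiable with $s_i$-Lipschitz gradient ($s_i>0$) and $c_i$-strongly convex ($c_i>0$). Let $\alpha_i>0$ with $\sum_i\alpha_i=1$, $\beta_i>0$, $\delta>0$, and $0<\sigma_i<\frac{\sqrt{2c_i}}{\sqrt{2c_i}+\sqrt{\beta_i}}$. Let $\{w^k\}=\{(u^k,\lambda^k,z^k)\}_{k\ge0}$, with $u^k=(u_1^k,\dots,u_m^k)\in\mathbb{R}^{mn}$, $\lambda^k=(\lambda_1^k,\dots,\lambda_m^k)\in\mathbb{R}^{mn}$, $z^k\in\mathbb{R}^n$, be generated from arbitrary initial points by: for $k\ge0$, $i\in[m]$, (i) $u_i^{k+1}$ satisfies $\|e_i^k(u_i^{k+1})\|\le\sigma_i\|e_i^k(u_i^k)\|$, where $e_i^k(u_i)=\nabla f_i(u_i)-\lambda_i^k+\beta_i(u_i-z^k)$; (ii) $\lambda_i^{k+1}=\lambda_i^k-\beta_i(u_i^{k+1}-z^k)$; (iii) $z^{k+1}=\frac{1}{1+\delta}\cdot\frac{\sum_{i}\alpha_i(\beta_iu_i^{k+1}-\lambda_i^{k+1})}{\sum_i\alpha_i\beta_i}+\frac{\delta}{1+\delta}z^k$. Then for every $k\ge0$ and every $w=(u,\lambda,z)\in\mathbb{R}^{mn}\times\mathbb{R}^{mn}\times\mathbb{R}^n$, $$(w^{k+1}-w)^{\top}F(w^{k+1})\le(u^{k+1}-u)^{\top}\nabla_uL_{\alpha,\beta}(u^{k+1},\lambda^k,z^k)+\tfrac12\Big(\|v^k-v\|_{H_1}^2-\|v^{k+1}-v\|_{H_1}^2-\|v^k-v^{k+1}\|_{H_1}^2\Big),$$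 where $v=(\lambda,z)$, $v^k=(\lambda^k,z^k)$, and $$H_1=\begin{pmatrix}I_\alpha I_\beta^{-1}& I_\alpha B\\ B^{\top}I_\alpha&(1+\delta)B^{\top}I_\alpha I_\beta B\end{pmatrix}\succ0.$$
   Context: Notation: $B=(I_n,\dots,I_n)^{\top}\in\mathbb{R}^{mn\times n}$ ($m$ copies of the $n\times n$ identity); $I_\alpha=\mathrm{diag}(\alpha_1I_n,\dots,\alpha_mI_n)$ and $I_\beta=\mathrm{diag}(\beta_1I_n,\dots,\beta_mI_n)$; $\nabla f(u)=(\nabla f_1(u_1),\dots,\nabla f_m(u_m))\in\mathbb{R}^{mn}$. The augmented Lagrangian is $L_{\alpha,\beta}(u,\lambda,z)=\sum_{i=1}^m\alpha_i\big(f_i(u_i)-\lambda_i^{\top}(u_i-z)+\frac{\beta_i}{2}\|u_i-z\|^2\big)$, so $\nabla_uL_{\alpha,\beta}(u,\lambda,z)$ has $i$-th block $\alpha_i(\nabla f_i(u_i)-\lambda_i+\beta_i(u_i-z))$. The map $F$ is $F(w)=\big(I_\alpha(\nabla f(u)-\lambda),\ I_\alpha(u-Bz),\ B^{\top}I_\alpha\lambda\big)$. For a symmetric positive definite matrix $H$, $\|x\|_H=(x^{\top}Hx)^{1/2}$. *)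

From HB Require Import structures.
From mathcomp Require Import all_boot all_order all_algebra.
From mathcomp Require Import all_classical all_reals all_analysis.
Set Implicit Arguments. Unset Strict Implicit. Unset Printing Implicit Defensive.
Import Order.TTheory GRing.Theory Num.Theory.
Import numFieldNormedType.Exports.
Local Open Scope ring_scope.

Section Defs.
Variable R : realType.

Definition dotv d (x y : 'cV[R]_d) : R := (x^T *m y) ord0 ord0.
Definition enorm d (x : 'cV[R]_d) : R := Num.sqrt (dotv x x).

Definition Hnorm d (H : 'M[R]_d) (x : 'cV[R]_d) : R :=
  Num.sqrt ((x^T *m H *m x) ord0 ord0).

Definition posdef d (H : 'M[R]_d) : Prop :=
  H^T = H /\ forall x : 'cV[R]_d, x != 0 -> 0 < (x^T *m H *m x) ord0 ord0.

Definition is_gradient d (f : 'cV[R]_d -> R) (g : 'cV[R]_d -> 'cV[R]_d) : Prop :=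
  forall x, differentiable f x /\ forall h, 'd f x h = dotv (g x) h.

Definition lipschitz_map d (g : 'cV[R]_d -> 'cV[R]_d) (s : R) : Prop :=
  forall x y, enorm (g x - g y) <= s * enorm (x - y).

Definition strongly_convex d (f : 'cV[R]_d -> R) (c : R) : Prop :=
  forall x y (t : R), 0 <= t <= 1 ->
    f (t *: x + (1 - t) *: y) <=
      t * f x + (1 - t) * f y - c / 2 * t * (1 - t) * enorm (x - y) ^+ 2.

Variables m n : nat.

(* i-th block u_i in R^n of u = (u_1,...,u_m) in R^{mn} *)
Definition blk (u : 'cV[R]_(m * n)) (i : 'I_m) : 'cV[R]_n :=
  (row i (vec_mx u^T))^T.

(* stacking (u_1,...,u_m) into R^{mn} *)
Definition stk (g : 'I_m -> 'cV[R]_n) : 'cV[R]_(m * n) :=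
  (mxvec (\matrix_(i < m) (g i)^T))^T.

(* B = (I_n, ..., I_n)^T *)
Definition Bmx : 'M[R]_(m * n, n) :=
  (\matrix_(j < n) mxvec (\matrix_(i < m, l < n) ((l == j)%:R : R)))^T.

(* I_a = diag(a_1 I_n, ..., a_m I_n) *)
Definition Idiag (a : 'I_m -> R) : 'M[R]_(m * n) :=
  diag_mx (mxvec (\matrix_(i < m, l < n) a i)).

Definition gradF (grad : 'I_m -> 'cV[R]_n -> 'cV[R]_n) (u : 'cV[R]_(m * n)) :=
  stk (fun i => grad i (blk u i)).

Definition gradL (grad : 'I_m -> 'cV[R]_n -> 'cV[R]_n) (alpha beta : 'I_m -> R)
  (u lam : 'cV[R]_(m * n)) (z : 'cV[R]_n) : 'cV[R]_(m * n) :=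
  stk (fun i => alpha i *: (grad i (blk u i) - blk lam i + beta i *: (blk u i - z))).

Definition Fmap (grad : 'I_m -> 'cV[R]_n -> 'cV[R]_n) (alpha : 'I_m -> R)
  (u lam : 'cV[R]_(m * n)) (z : 'cV[R]_n) : 'cV[R]_(m * n + (m * n + n)) :=
  col_mx (Idiag alpha *m (gradF grad u - lam))
    (col_mx (Idiag alpha *m (u - Bmx *m z)) (Bmx^T *m Idiag alpha *m lam)).

Definition wvec (u lam : 'cV[R]_(m * n)) (z : 'cV[R]_n) : 'cV[R]_(m * n + (m * n + n)) :=
  col_mx u (col_mx lam z).

Definition vvec (lam : 'cV[R]_(m * n)) (z : 'cV[R]_n) : 'cV[R]_(m * n + n) :=
  col_mx lam z.

Definition H1 (alpha beta : 'I_m -> R) (delta : R) : 'M[R]_(m * n + n) :=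
  block_mx (Idiag alpha *m invmx (Idiag beta)) (Idiag alpha *m Bmx)
           (Bmx^T *m Idiag alpha)
           ((1 + delta) *: (Bmx^T *m Idiag alpha *m Idiag beta *m Bmx)).

End Defs.

From HB Require Import structures.
From mathcomp Require Import all_boot all_order all_algebra.
From mathcomp Require Import all_classical all_reals all_analysis.
From mathcomp Require Import ring lra.
Import Order.TTheory GRing.Theory Num.Theory.
Import numFieldNormedType.Exports.
Local Open Scope ring_scope.
Set Implicit Arguments. Unset Strict Implicit. Unset Printing Implicit Defensive.

(* The multiplier update reads lam^k - lam^(k+1) = I_beta (u^(k+1) - B z^k).
   With it, the first block row of H_1 (v^k - v^(k+1)) is I_alpha (u^(k+1) - B z^(k+1)),
   and the z-update says exactly that the second one is B^T I_alpha lam^(k+1); so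
   H_1 (v^k - v^(k+1)) is the (lam, z)-part of F(w^(k+1)).  The multiplier update
   also turns nabla_u L(u^(k+1), lam^k, z^k) into the u-part
   I_alpha (nabla f(u^(k+1)) - lam^(k+1)), and the three-point identity for the
   symmetric matrix H_1 concludes.  H_1 is positive definite by completing the
   square: for x = (a, b),
     x^T H_1 x = sum_i alpha_i / beta_i |a_i + beta_i b|^2
                 + delta (sum_i alpha_i beta_i) |b|^2. *)

Section Dot.
Variables (R : realType) (d : nat).
Implicit Types (x y w : 'cV[R]_d) (H : 'M[R]_d).

Lemma dotvE x y : dotv x y = \sum_k x k ord0 * y k ord0.
Proof. by rewrite /dotv mxE; apply: eq_bigr => k _; rewrite mxE. Qed.

Lemma dotvC x y : dotv x y = dotv y x.
Proof. by rewrite !dotvE; apply: eq_bigr => k _; rewrite mulrC. Qed.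

Lemma dotvDl x y w : dotv (x + y) w = dotv x w + dotv y w.
Proof. by rewrite !dotvE -big_split; apply: eq_bigr => k _; rewrite mxE mulrDl. Qed.

Lemma dotvDr x y w : dotv w (x + y) = dotv w x + dotv w y.
Proof. by rewrite !(dotvC w) dotvDl. Qed.

Lemma dotvZl a x y : dotv (a *: x) y = a * dotv x y.
Proof. by rewrite !dotvE mulr_sumr; apply: eq_bigr => k _; rewrite mxE mulrA. Qed.

Lemma dotvZr a x y : dotv y (a *: x) = a * dotv y x.
Proof. by rewrite !(dotvC y) dotvZl. Qed.

Lemma dotv_sumr (I : finType) (F : I -> 'cV[R]_d) x :
  dotv x (\sum_i F i) = \sum_i dotv x (F i).
Proof.
rewrite dotvE (eq_bigr (fun k => \sum_i x k ord0 * F i k ord0)).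
  by rewrite exchange_big; apply: eq_bigr => i _; rewrite dotvE.
by move=> k _; rewrite summxE mulr_sumr.
Qed.

Lemma dotv_ge0 x : 0 <= dotv x x.
Proof. by rewrite dotvE; apply: sumr_ge0 => k _; rewrite -expr2 sqr_ge0. Qed.

Lemma dotv_eq0 x : (dotv x x == 0) = (x == 0).
Proof.
apply/idP/eqP => [|->]; last by rewrite dotvE big1 // => k _; rewrite mxE mul0r.
rewrite dotvE => /eqP/psumr_eq0P x2_0; apply/matrixP => k l; rewrite (ord1 l) mxE.
by apply/eqP; rewrite -sqrf_eq0 expr2 x2_0 // => k' _; rewrite -expr2 sqr_ge0.
Qed.

Lemma dotv_mulmx H x y : dotv x (H *m y) = dotv (H^T *m x) y.
Proof. by rewrite /dotv mulmxA trmx_mul trmxK. Qed.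

Lemma qform_dotv H x : (x^T *m H *m x) ord0 ord0 = dotv x (H *m x).
Proof. by rewrite /dotv mulmxA. Qed.

Lemma posdef_qform_ge0 H x : posdef H -> 0 <= dotv x (H *m x).
Proof.
case=> _ H_pos; have [->|x_neq0] := eqVneq x 0.
  by rewrite mulmx0 dotvE big1 // => k _; rewrite mxE mulr0.
by rewrite -qform_dotv; apply/ltW/H_pos.
Qed.

Lemma posdef_Hnorm_sqr H x : posdef H -> Hnorm H x ^+ 2 = dotv x (H *m x).
Proof. by move=> H_pd; rewrite /Hnorm sqr_sqrtr qform_dotv ?posdef_qform_ge0. Qed.

Lemma posdef_three_point H a b v : posdef H ->
  Hnorm H (a - v) ^+ 2 - Hnorm H (b - v) ^+ 2 - Hnorm H (a - b) ^+ 2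
  = 2 * dotv (b - v) (H *m (a - b)).
Proof.
move=> H_pd; rewrite !posdef_Hnorm_sqr //.
have -> : a - v = (a - b) + (b - v) by rewrite addrA subrK.
move: (a - b) (b - v) => p r.
rewrite mulmxDr !dotvDl !dotvDr (dotv_mulmx H p r) H_pd.1 (dotvC _ r).
by lra.
Qed.

End Dot.

Lemma dotv_col (R : realType) d1 d2 (a c : 'cV[R]_d1) (b e : 'cV[R]_d2) :
  dotv (col_mx a b) (col_mx c e) = dotv a c + dotv b e.
Proof.
rewrite !dotvE big_split_ord /=; congr (_ + _); apply: eq_bigr => k _;
by rewrite ?col_mxEu ?col_mxEd.
Qed.

Section Blocks.
Variables (R : realType) (m n : nat).
Implicit Types (x y : 'cV[R]_(m * n)) (a b : 'I_m -> R).
Local Notation B := (Bmx R m n).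

Lemma sum_mxvec (F : 'I_(m * n) -> R) :
  \sum_k F k = \sum_i \sum_j F (mxvec_index i j).
Proof.
rewrite (reindex _ (curry_mxvec_bij _ _)) /= pair_bigA.
by apply: eq_bigr => [[i j]] _.
Qed.

Lemma blkE x i j l : blk x i j l = x (mxvec_index i j) l.
Proof. by rewrite /blk !mxE (ord1 l). Qed.

Lemma blkP x y : (forall i, blk x i = blk y i) <-> x = y.
Proof.
split=> [xy|-> //]; apply/matrixP => k l; rewrite (ord1 l).
by case: (mxvec_indexP k) => i j; move/matrixP/(_ j ord0): (xy i); rewrite !blkE.
Qed.

Lemma blkD x y i : blk (x + y) i = blk x i + blk y i.
Proof. by apply/matrixP => j l; rewrite !mxE. Qed.

Lemma blkN x i : blk (- x) i = - blk x i.
Proof. by apply/matrixP => j l; rewrite !mxE. Qed.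

Lemma blkB x y i : blk (x - y) i = blk x i - blk y i.
Proof. by rewrite blkD blkN. Qed.

Lemma blk0 i : blk (0 : 'cV[R]_(m * n)) i = 0.
Proof. by apply/matrixP => j l; rewrite !mxE. Qed.

Lemma blk_stk (g : 'I_m -> 'cV[R]_n) i : blk (stk g) i = g i.
Proof. by apply/matrixP => j l; rewrite (ord1 l) /blk /stk !mxE mxvecE !mxE. Qed.

Lemma blk_Idiag a x i : blk (Idiag n a *m x) i = a i *: blk x i.
Proof.
apply/matrixP => j l; rewrite (ord1 l) blkE /Idiag mul_diag_mx [RHS]mxE blkE.
by rewrite !mxE mxvecE !mxE.
Qed.

Lemma dotv_blk x y : dotv x y = \sum_i dotv (blk x i) (blk y i).
Proof.
rewrite dotvE sum_mxvec; apply: eq_bigr => i _; rewrite dotvE.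
by apply: eq_bigr => j _; rewrite !blkE.
Qed.

Lemma BmxE i l j : B (mxvec_index i l) j = (l == j)%:R.
Proof. by rewrite /Bmx !mxE mxvecE mxE. Qed.

Lemma blk_Bmx (w : 'cV[R]_n) i : blk (B *m w) i = w.
Proof.
apply/matrixP => j l; rewrite (ord1 l) blkE mxE.
rewrite (bigD1 j) //= BmxE eqxx mul1r big1 ?addr0 // => j' /negbTE.
by rewrite BmxE eq_sym => ->; rewrite mul0r.
Qed.

Lemma trBmx_mul x : B^T *m x = \sum_i blk x i.
Proof.
apply/matrixP => j l; rewrite (ord1 l) summxE mxE sum_mxvec.
apply: eq_bigr => i _; rewrite blkE.
rewrite (bigD1 j) //= mxE BmxE eqxx mul1r big1 ?addr0 // => j' /negbTE.
by rewrite mxE BmxE => ->; rewrite mul0r.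
Qed.

Lemma trBmx_Idiag_mul a x : B^T *m Idiag n a *m x = \sum_i a i *: blk x i.
Proof.
by rewrite -mulmxA trBmx_mul; apply: eq_bigr => i _; rewrite blk_Idiag.
Qed.

Lemma trBmx_Idiag_Bmx_mul a (w : 'cV[R]_n) :
  B^T *m Idiag n a *m B *m w = (\sum_i a i) *: w.
Proof.
rewrite -mulmxA trBmx_Idiag_mul scaler_suml.
by apply: eq_bigr => i _; rewrite blk_Bmx.
Qed.

Lemma Idiag_mul a b : Idiag n a *m Idiag n b = Idiag n (fun i => a i * b i).
Proof.
rewrite /Idiag mulmx_diag; congr diag_mx; apply/matrixP => l k; rewrite (ord1 l).
by case: (mxvec_indexP k) => i j; rewrite !mxE !mxvecE !mxE.
Qed.

Lemma Idiag1 : Idiag (m:=m) n (fun=> 1 : R) = 1%:M.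
Proof.
rewrite /Idiag -diag_const_mx; congr diag_mx; apply/matrixP => l k; rewrite (ord1 l).
by case: (mxvec_indexP k) => i j; rewrite !mxE !mxvecE !mxE.
Qed.

Lemma Idiag_unit b : (forall i, b i != 0) -> Idiag n b \in unitmx.
Proof.
move=> b_neq0; rewrite unitmxE det_diag unitfE; apply/prodf_neq0 => k _.
by case: (mxvec_indexP k) => i j; rewrite mxvecE mxE.
Qed.

Lemma invmx_Idiag b : (forall i, b i != 0) ->
  invmx (Idiag n b) = Idiag n (fun i => (b i)^-1).
Proof.
move=> b_neq0; have bVb : Idiag n b *m Idiag n (fun i => (b i)^-1) = 1%:M.
  by rewrite Idiag_mul -Idiag1; congr Idiag; apply: funext => i; rewrite mulfV.
by rewrite -[invmx _]mulmx1 -bVb mulKmx // Idiag_unit.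
Qed.

Lemma tr_Idiag a : (Idiag n a)^T = Idiag n a.
Proof. exact: tr_diag_mx. Qed.

End Blocks.

Lemma sumr_ord_gt0 (R : numDomainType) m (F : 'I_m -> R) :
  (0 < m)%N -> (forall i, 0 < F i) -> 0 < \sum_i F i.
Proof.
move=> m_gt0 F_gt0; have F_ge0 i : true -> 0 <= F i by move=> _; exact: ltW.
rewrite lt_def psumr_neq0 // sumr_ge0 // andbT.
by apply/hasP; exists (Ordinal m_gt0); rewrite ?mem_index_enum ?F_gt0.
Qed.

Section H1.
Variables (R : realType) (m n : nat) (alpha beta : 'I_m -> R) (delta : R).
Hypothesis beta_neq0 : forall i, beta i != 0.
Local Notation B := (Bmx R m n).
Local Notation Ia := (Idiag n alpha).

Lemma H1_Idiag : H1 n alpha beta delta =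
  block_mx (Idiag n (fun i => alpha i / beta i)) (Ia *m B) (B^T *m Ia)
           ((1 + delta) *: (B^T *m Idiag n (fun i => alpha i * beta i) *m B)).
Proof. by rewrite /H1 invmx_Idiag // -(mulmxA _ Ia) !Idiag_mul. Qed.

Lemma trmx_H1 : (H1 n alpha beta delta)^T = H1 n alpha beta delta.
Proof.
rewrite H1_Idiag tr_block_mx !trmx_mul trmxK !tr_Idiag linearZ /= !trmx_mul.
by rewrite trmxK tr_Idiag mulmxA.
Qed.

Lemma H1_qform a b :
  dotv (col_mx a b) (H1 n alpha beta delta *m col_mx a b)
  = \sum_i alpha i / beta i * dotv (blk a i + beta i *: b) (blk a i + beta i *: b)
    + delta * ((\sum_i alpha i * beta i) * dotv b b).
Proof.
set S := \sum_i alpha i * beta i.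
have aa : dotv a (Idiag n (fun i => alpha i / beta i) *m a)
    = \sum_i alpha i / beta i * dotv (blk a i) (blk a i).
  by rewrite dotv_blk; apply: eq_bigr => i _; rewrite blk_Idiag dotvZr.
have ab : dotv a (Ia *m B *m b) = \sum_i alpha i * dotv (blk a i) b.
  rewrite dotv_blk; apply: eq_bigr => i _.
  by rewrite -mulmxA blk_Idiag blk_Bmx dotvZr.
have ba : dotv b (B^T *m Ia *m a) = \sum_i alpha i * dotv (blk a i) b.
  rewrite trBmx_Idiag_mul dotv_sumr; apply: eq_bigr => i _.
  by rewrite dotvZr dotvC.
have square i : alpha i / beta i * dotv (blk a i + beta i *: b) (blk a i + beta i *: b)
    = alpha i / beta i * dotv (blk a i) (blk a i)
      + 2 * (alpha i * dotv (blk a i) b) + alpha i * beta i * dotv b b.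
  by rewrite !dotvDl !dotvDr !dotvZl !dotvZr (dotvC b); field.
rewrite H1_Idiag mul_block_col dotv_col !dotvDr aa ab ba -scalemxAl dotvZr.
rewrite trBmx_Idiag_Bmx_mul dotvZr (eq_bigr _ (fun i _ => square i)).
rewrite !big_split /= -mulr_sumr -mulr_suml -/S.
by ring.
Qed.

End H1.

Lemma H1_posdef (R : realType) (m n : nat) (alpha beta : 'I_m -> R) (delta : R) :
  (0 < m)%N -> (forall i, 0 < alpha i) -> (forall i, 0 < beta i) -> 0 < delta ->
  posdef (H1 n alpha beta delta).
Proof.
move=> m_gt0 alpha_gt0 beta_gt0 delta_gt0.
have beta_neq0 i : beta i != 0 by rewrite gt_eqF.
split=> [|x]; first exact: trmx_H1.
rewrite qform_dotv -(vsubmxK x) H1_qform //.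
move: (usubmx x) (dsubmx x) => a b ab_neq0.
have S_gt0 : 0 < \sum_i alpha i * beta i.
  by apply: sumr_ord_gt0 => // i; apply: mulr_gt0.
have term_ge0 i : true -> 0 <= alpha i / beta i *
    dotv (blk a i + beta i *: b) (blk a i + beta i *: b).
  by move=> _; rewrite !mulr_ge0 ?dotv_ge0 ?invr_ge0 ?ltW.
rewrite lt_def addr_ge0 ?sumr_ge0 ?mulr_ge0 ?dotv_ge0 ?ltW // andbT.
rewrite paddr_eq0 ?sumr_ge0 ?mulr_ge0 ?dotv_ge0 ?ltW //.
apply: contra ab_neq0 => /andP[/eqP/(psumr_eq0P term_ge0) terms_eq0].
rewrite !mulf_eq0 (gt_eqF delta_gt0) (gt_eqF S_gt0) dotv_eq0 => /eqP b0.
suff -> : a = 0 by rewrite b0 col_mx0.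
apply/blkP => i; rewrite blk0; apply/eqP; rewrite -dotv_eq0.
move/eqP: (terms_eq0 i isT).
rewrite b0 scaler0 addr0 !mulf_eq0 invr_eq0 (gt_eqF (alpha_gt0 i)).
by rewrite (negbTE (beta_neq0 i)).
Qed.

Section Update.
Variables (R : realType) (m n : nat) (grad : 'I_m -> 'cV[R]_n -> 'cV[R]_n).
Variables (alpha beta : 'I_m -> R) (delta : R).
Variables (u1 lam0 lam1 : 'cV[R]_(m * n)) (z0 z1 : 'cV[R]_n).
Local Notation B := (Bmx R m n).
Local Notation Ia := (Idiag n alpha).
Local Notation S := (\sum_i alpha i * beta i).

Hypothesis beta_neq0 : forall i, beta i != 0.
Hypothesis S_neq0 : S != 0.
Hypothesis delta1_neq0 : 1 + delta != 0.
Hypothesis lam_update : forall i,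
  blk lam1 i = blk lam0 i - beta i *: (blk u1 i - z0).
Hypothesis z_update :
  z1 = (1 + delta)^-1 *:
         (S^-1 *: \sum_i alpha i *: (beta i *: blk u1 i - blk lam1 i))
       + (delta / (1 + delta)) *: z0.

Lemma lam_update_mx : lam0 - lam1 = Idiag n beta *m (u1 - B *m z0).
Proof.
apply/blkP => i; rewrite blkB lam_update blk_Idiag blkB blk_Bmx.
by rewrite opprB addrCA subrr addr0.
Qed.

Lemma gradL_update : gradL grad alpha beta u1 lam0 z0 = Ia *m (gradF grad u1 - lam1).
Proof.
apply/blkP => i; rewrite /gradL /gradF blk_stk blk_Idiag blkB blk_stk lam_update.
by rewrite opprB addrA addrAC.
Qed.

Lemma z_update_mx :
  B^T *m Ia *m (lam0 - lam1)
  + ((1 + delta) *: (B^T *m Ia *m Idiag n beta *m B)) *m (z0 - z1)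
  = B^T *m Ia *m lam1.
Proof.
rewrite -scalemxAl -[_ *m Idiag n beta](mulmxA _ Ia) Idiag_mul.
rewrite trBmx_Idiag_Bmx_mul lam_update_mx !trBmx_Idiag_mul.
set U := \sum_i (alpha i * beta i) *: blk u1 i.
set L := \sum_i alpha i *: blk lam1 i.
have sum_u_z0 : \sum_i alpha i *: blk (Idiag n beta *m (u1 - B *m z0)) i
    = U - S *: z0.
  rewrite scaler_suml -sumrB; apply: eq_bigr => i _.
  by rewrite blk_Idiag blkB blk_Bmx !scalerA scalerBr.
have z1_scaled : ((1 + delta) * S) *: z1 = U - L + (delta * S) *: z0.
  rewrite z_update scalerDr !scalerA.
  have -> : (1 + delta) * S * ((1 + delta)^-1 / S) = 1.
    by field; rewrite delta1_neq0 S_neq0.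
  have -> : (1 + delta) * S * (delta / (1 + delta)) = delta * S by field.
  rewrite scale1r -sumrB; congr (_ + _); apply: eq_bigr => i _.
  by rewrite scalerBr scalerA.
rewrite sum_u_z0 scalerA scalerBr z1_scaled.
by apply/matrixP => j l; rewrite !mxE; ring.
Qed.

Lemma H1_update :
  H1 n alpha beta delta *m (vvec lam0 z0 - vvec lam1 z1)
  = col_mx (Ia *m (u1 - B *m z1)) (B^T *m Ia *m lam1).
Proof.
rewrite /H1 /vvec opp_col_mx add_col_mx mul_block_col z_update_mx; congr col_mx.
rewrite lam_update_mx -mulmxA mulKmx ?Idiag_unit // -mulmxA -mulmxDr.
by rewrite mulmxBr addrA subrK.
Qed.

Lemma Fmap_update uu ll zz :
  dotv (wvec u1 lam1 z1 - wvec uu ll zz) (Fmap grad alpha u1 lam1 z1)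
  = dotv (u1 - uu) (gradL grad alpha beta u1 lam0 z0)
    + dotv (vvec lam1 z1 - vvec ll zz)
           (H1 n alpha beta delta *m (vvec lam0 z0 - vvec lam1 z1)).
Proof.
rewrite H1_update gradL_update /wvec /vvec /Fmap !opp_col_mx !add_col_mx.
by rewrite !dotv_col addrA.
Qed.

End Update.

Unset Implicit Arguments.

Theorem lemma1 (R : realType) (m n : nat)
  (f : 'I_m -> 'cV[R]_n -> R) (grad : 'I_m -> 'cV[R]_n -> 'cV[R]_n)
  (s c alpha beta sigma : 'I_m -> R) (delta : R)
  (u lam : nat -> 'cV[R]_(m * n)) (z : nat -> 'cV[R]_n) :
  (0 < m)%N -> (0 < n)%N ->
  (forall i, is_gradient (f i) (grad i)) ->
  (forall i, 0 < s i /\ lipschitz_map (grad i) (s i)) ->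
  (forall i, 0 < c i /\ strongly_convex (f i) (c i)) ->
  (forall i, 0 < alpha i) -> \sum_i alpha i = 1 ->
  (forall i, 0 < beta i) -> 0 < delta ->
  (forall i, 0 < sigma i /\
     sigma i < Num.sqrt (2 * c i) / (Num.sqrt (2 * c i) + Num.sqrt (beta i))) ->
  (* (i) inexact u-update *)
  (forall k i,
     let e := fun x : 'cV[R]_n =>
       grad i x - blk (lam k) i + beta i *: (x - z k) in
     enorm (e (blk (u k.+1) i)) <= sigma i * enorm (e (blk (u k) i))) ->
  (* (ii) multiplier update *)
  (forall k i,
     blk (lam k.+1) i = blk (lam k) i - beta i *: (blk (u k.+1) i - z k)) ->
  (* (iii) z-update *)
  (forall k,
     z k.+1 = (1 + delta)^-1 *:
                ((\sum_i alpha i * beta i)^-1 *: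
                   \sum_i alpha i *: (beta i *: blk (u k.+1) i - blk (lam k.+1) i))
              + (delta / (1 + delta)) *: z k) ->
  posdef (H1 n alpha beta delta) /\
  forall (k : nat) (uu ll : 'cV[R]_(m * n)) (zz : 'cV[R]_n),
    dotv (wvec (u k.+1) (lam k.+1) (z k.+1) - wvec uu ll zz)
         (Fmap grad alpha (u k.+1) (lam k.+1) (z k.+1))
    <= dotv (u k.+1 - uu) (gradL grad alpha beta (u k.+1) (lam k) (z k))
       + 2^-1 * (Hnorm (H1 n alpha beta delta) (vvec (lam k) (z k) - vvec ll zz) ^+ 2
                 - Hnorm (H1 n alpha beta delta) (vvec (lam k.+1) (z k.+1) - vvec ll zz) ^+ 2
                 - Hnorm (H1 n alpha beta delta) (vvec (lam k) (z k) - vvec (lam k.+1) (z k.+1)) ^+ 2).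
Proof.
move=> m_gt0 _ _ _ _ alpha_gt0 _ beta_gt0 delta_gt0 _ _ lam_update z_update.
have H1_pd := H1_posdef n m_gt0 alpha_gt0 beta_gt0 delta_gt0.
split=> // k uu ll zz.
have beta_neq0 i : beta i != 0 by rewrite gt_eqF.
have S_neq0 : \sum_i alpha i * beta i != 0.
  by rewrite gt_eqF // sumr_ord_gt0 // => i; rewrite mulr_gt0.
have delta1_neq0 : 1 + delta != 0 by rewrite gt_eqF // addr_gt0.
rewrite (Fmap_update grad beta_neq0 S_neq0 delta1_neq0 (lam_update k) (z_update k)).
by rewrite posdef_three_point // mulKf ?pnatr_eq0.
Qed.
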